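(* Let $1\le p\le\infty$, $E$ a Banach space, $Y$ a Banach lattice and $T:E\to Y$ a bounded linear operator. Then $T$ is positive $p$-majorizing if and only if $T$ is positive strongly $p$-summing.
   Context: $p^{\ast}$ is the conjugate exponent of $p$; for a finite family $(y_i^{\ast})$ in $Y^{\ast}$, $\|(y_i^{\ast})\|_{p^{\ast},\omega}=\sup_{y\in B_{Y}}\|(\langle y_i^{\ast},y\rangle)_i\|_{p^{\ast}}$. $T$ is positive $p$-majorizing if there is $C>0$ with $(\sum_{i=1}^n|\langle T(z_i),y_i^{\ast}\rangle|^{p^{\ast}})^{1/p^{\ast}}\le C\|(y_i^{\ast})_{i=1}^n\|_{p^{\ast},\omega}$ for all $n$, $z_i\in B_E$ and positive $y_i^{\ast}\in Y^{\ast}$. $T$ is positive strongly $p$-summing if there is $C>0$ with $\sum_{i=1}^n|\langle T(x_i),y_i^{\ast}\rangle|\le C(\sum_i\|x_i\|^p)^{1/p}\|(y_i^{\ast})_{i=1}^n\|_{p^{\ast},\omega}$ for all $n$, $x_i\in E$ and positive $y_i^{\ast}\in Y^{\ast}$. *)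

From HB Require Import structures.
From mathcomp Require Import all_boot all_order all_algebra.
From mathcomp Require Import all_classical all_reals all_analysis.
Set Implicit Arguments. Unset Strict Implicit. Unset Printing Implicit Defensive.
Import Order.TTheory GRing.Theory Num.Theory.
Import numFieldNormedType.Exports.
Local Open Scope classical_set_scope.
Local Open Scope ring_scope.

Section Defs.
Variable R : realType.

Definition lpnorm (q : \bar R) (n : nat) (a : 'I_n -> R) : R :=
  match q with
  | EFin r => (\sum_(i < n) `|a i| `^ r) `^ (r^-1)
  | EPInf => \big[Num.max/0]_(i < n) `|a i|
  | ENInf => 0
  end.

Definition conj_exp (p : \bar R) : \bar R :=
  match p with
  | EFin r => if r == 1 then +oo%E else (r / (r - 1))%:E
  | EPInf => 1%E
  | ENInf => -oo%E
  end.

Definition bounded_linear (E F : normedModType R) (T : E -> F) : Prop :=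
  (forall (a : R) (x y : E), T (a *: x + y) = a *: T x + T y) /\
  exists C : R, forall x : E, `|T x| <= C * `|x|.

Definition dual_elt (Y : normedModType R) (f : Y -> R) : Prop :=
  (forall (a : R) (x y : Y), f (a *: x + y) = a * f x + f y) /\
  exists C : R, forall y : Y, `|f y| <= C * `|y|.

Definition is_sup_ord (Y : Type) (le : Y -> Y -> Prop) (x y s : Y) : Prop :=
  le x s /\ le y s /\ (forall u, le x u -> le y u -> le s u).

(* le makes the normed space Y a normed vector lattice
   (together with completeness of Y, a Banach lattice) *)
Definition banach_lattice_order (Y : normedModType R) (le : Y -> Y -> Prop) : Prop :=
  (forall x, le x x) /\
  (forall x y, le x y -> le y x -> x = y) /\
  (forall x y z, le x y -> le y z -> le x z) /\
  (forall x y z, le x y -> le (x + z) (y + z)) /\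
  (forall (a : R) x y, 0 <= a -> le x y -> le (a *: x) (a *: y)) /\
  (forall x y, exists s, is_sup_ord le x y s) /\
  (forall x y ax ay, is_sup_ord le x (- x) ax -> is_sup_ord le y (- y) ay ->
      le ax ay -> `|x| <= `|y|).

Definition positive_functional (Y : normedModType R) (le : Y -> Y -> Prop) (f : Y -> R) :=
  forall y, le 0 y -> 0 <= f y.

Definition weak_norm (Y : normedModType R) (q : \bar R) (n : nat) (ys : 'I_n -> Y -> R) : R :=
  sup [set lpnorm q (fun i => ys i y) | y in [set y : Y | `|y| <= 1]].

Definition positive_p_majorizing (E Y : normedModType R) (le : Y -> Y -> Prop)
  (p : \bar R) (T : E -> Y) : Prop :=
  exists2 C : R, 0 < C &
    forall (n : nat) (z : 'I_n -> E) (ys : 'I_n -> Y -> R),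
      (forall i, `|z i| <= 1) ->
      (forall i, dual_elt (ys i) /\ positive_functional le (ys i)) ->
      lpnorm (conj_exp p) (fun i => ys i (T (z i)))
        <= C * weak_norm (conj_exp p) ys.

Definition positive_strongly_p_summing (E Y : normedModType R) (le : Y -> Y -> Prop)
  (p : \bar R) (T : E -> Y) : Prop :=
  exists2 C : R, 0 < C &
    forall (n : nat) (x : 'I_n -> E) (ys : 'I_n -> Y -> R),
      (forall i, dual_elt (ys i) /\ positive_functional le (ys i)) ->
      \sum_(i < n) `|ys i (T (x i))|
        <= C * lpnorm p (fun i => `|x i|) * weak_norm (conj_exp p) ys.

End Defs.

From HB Require Import structures.
From mathcomp Require Import all_boot all_order all_algebra.
From mathcomp Require Import all_classical all_reals all_analysis.
Import Order.TTheory GRing.Theory Num.Theory.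
Import numFieldNormedType.Exports.
Local Open Scope ring_scope.

(* Writing x_i = |x_i| z_i with |z_i| <= 1, the finite Hoelder inequality
   sum_i |x_i| |<y_i*, T z_i>| <= ||(x_i)||_p ||(<y_i*, T z_i>)||_p* turns the
   majorizing estimate into the strongly summing one.  Conversely, ||a||_p* is
   bounded by any K with sum_i w_i |a_i| <= K ||w||_p for all w >= 0 (test with
   w_i = |a_i|^(p*-1), or a unit vector when p = 1); for a_i = <y_i*, T z_i> the
   left side is sum_i |<y_i*, T (w_i z_i)>| and |w_i z_i| <= w_i, so strong
   summability provides K. *)

Section ConjugateExponents.
Context {R : realType}.

Variant conj_exp_spec : \bar R -> \bar R -> Prop :=
  | ConjExp1 : conj_exp_spec 1%:E +oo%E
  | ConjExpy : conj_exp_spec +oo%E 1%:E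
  | ConjExpFin (r q : R) of 0 < r & 0 < q & r^-1 + q^-1 = 1 :
      conj_exp_spec r%:E q%:E.

Lemma conj_expP (p : \bar R) : (1%:E <= p)%E -> conj_exp_spec p (conj_exp p).
Proof.
case: p => [r||] //=; last by constructor.
rewrite lee_fin => r_ge1; have [->|r_neq1] := eqVneq r 1; first by constructor.
have r_gt1 : 1 < r by rewrite lt_neqAle eq_sym r_neq1.
have r1_gt0 : 0 < r - 1 by rewrite subr_gt0.
have r_gt0 : 0 < r := lt_trans ltr01 r_gt1.
constructor; rewrite ?divr_gt0 // invf_div.
by rewrite -{1}[r^-1]mul1r -mulrDl addrC subrK mulfV ?gt_eqF.
Qed.

Lemma conjugate_subr1_mul (r q : R) : 0 < r -> 0 < q -> r^-1 + q^-1 = 1 ->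
  (q - 1) * r = q.
Proof.
move=> r_gt0 q_gt0 rq.
have qr : q + r = q * r.
  rewrite -[RHS]mulr1 -rq mulrDr mulfK ?gt_eqF //.
  by rewrite mulrAC mulfV ?gt_eqF // mul1r.
by rewrite mulrBl mul1r -qr addrK.
Qed.

End ConjugateExponents.

Section FiniteHoelder.
Context {R : realType}.

Lemma hoelder_sum n (a b : 'I_n -> R) (p q : R) :
  (forall i, 0 <= a i) -> (forall i, 0 <= b i) ->
  0 < p -> 0 < q -> p^-1 + q^-1 = 1 ->
  \sum_(i < n) a i * b i <=
    (\sum_(i < n) a i `^ p) `^ p^-1 * (\sum_(i < n) b i `^ q) `^ q^-1.
Proof.
move=> + + p_gt0 q_gt0 pq; elim: n a b => [|n IHn] a b a_ge0 b_ge0.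
  by rewrite !big_ord0 mulr_ge0 ?powR_ge0.
rewrite !big_ord_recr /=.
apply: le_trans
  (lerD (IHn _ _ (fun i => a_ge0 _) (fun i => b_ge0 _)) (lexx _)) _.
set A := \sum_(i < n) _ `^ p; set B := \sum_(i < n) _ `^ q.
have A_ge0 : 0 <= A by apply: sumr_ge0 => i _; apply: powR_ge0.
have B_ge0 : 0 <= B by apply: sumr_ge0 => i _; apply: powR_ge0.
have := hoelder2 (powR_ge0 A p^-1) (a_ge0 ord_max)
  (powR_ge0 B q^-1) (b_ge0 ord_max) p_gt0 q_gt0 pq.
by rewrite -!powRrM !mulVf ?gt_eqF // !powRr1.
Qed.

End FiniteHoelder.

Section LpNorm.
Context {R : realType}.
Implicit Types (q : \bar R) (n : nat).

Lemma lpnorm_ge0 q n (a : 'I_n -> R) : 0 <= lpnorm q a.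
Proof.
case: q => [r||] //=; first exact: powR_ge0.
by elim/big_ind: _ => // u v u_ge0 v_ge0; rewrite le_max u_ge0.
Qed.

Lemma lpnorm1 n (a : 'I_n -> R) : lpnorm 1%:E a = \sum_(i < n) `|a i|.
Proof.
rewrite /= invr1 powRr1; last by apply: sumr_ge0 => i _; apply: powR_ge0.
by apply: eq_bigr => i _; rewrite powRr1.
Qed.

Lemma lpnorm_le q n (a b : 'I_n -> R) : (0 < q)%E ->
  (forall i, `|a i| <= `|b i|) -> lpnorm q a <= lpnorm q b.
Proof.
case: q => [r||] //= + ab; last by move=> _; apply: le_bigmax2 => i _.
rewrite lte_fin => r_gt0.
have sum_ge0 (c : 'I_n -> R) : 0 <= \sum_(i < n) `|c i| `^ r.
  by apply: sumr_ge0 => i _; apply: powR_ge0.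
apply: ge0_ler_powR; rewrite ?invr_ge0 ?nnegrE ?(ltW r_gt0) //.
by apply: ler_sum => i _; apply: ge0_ler_powR; rewrite ?nnegrE ?(ltW r_gt0).
Qed.

Lemma weak_norm_ge0 (Y : normedModType R) q n (ys : 'I_n -> Y -> R) :
  0 <= weak_norm q ys.
Proof.
rewrite /weak_norm; set S := (X in sup X).
have [supS|/sup_out->//] := pselect (has_sup S).
apply: le_trans (lpnorm_ge0 q _ (fun i => ys i 0)) (sup_upper_bound supS _).
by exists 0; rewrite //= normr0.
Qed.

End LpNorm.

Section LpDuality.
Context {R : realType}.
Implicit Types (p : \bar R) (n : nat).

Lemma lpnorm_hoelder p n (a b : 'I_n -> R) : (1%:E <= p)%E ->
  \sum_(i < n) `|a i * b i| <= lpnorm p a * lpnorm (conj_exp p) b.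
Proof.
case/conj_expP => [||r q r_gt0 q_gt0 rq].
- rewrite lpnorm1 mulr_suml; apply: ler_sum => i _.
  by rewrite normrM ler_wpM2l //; apply: le_bigmax.
- rewrite lpnorm1 mulr_sumr; apply: ler_sum => i _.
  by rewrite normrM ler_wpM2r //; apply: le_bigmax.
- under eq_bigr do rewrite normrM.
  exact: hoelder_sum (fun i => normr_ge0 _) (fun i => normr_ge0 _)
    r_gt0 q_gt0 rq.
Qed.

Lemma lpnorm_conj_exp_le p n (a : 'I_n -> R) (K : R) :
  (1%:E <= p)%E -> 0 <= K ->
  (forall w : 'I_n -> R, (forall i, 0 <= w i) ->
     \sum_(i < n) w i * `|a i| <= K * lpnorm p w) ->
  lpnorm (conj_exp p) a <= K.
Proof.
case/conj_expP => [||r q r_gt0 q_gt0 rq] K_ge0 dualK.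
- apply: bigmax_le => // j _.
  pose w i : R := (i == j)%:R.
  have wa : \sum_(i < n) w i * `|a i| = `|a j|.
    rewrite (bigD1 j) //= /w eqxx mul1r big1 ?addr0 // => i /negbTE ->.
    by rewrite mul0r.
  have w_norm : \sum_(i < n) `|w i| = 1.
    rewrite (bigD1 j) //= /w eqxx normr1 big1 ?addr0 // => i /negbTE ->.
    by rewrite normr0.
  by have := dualK w (fun i => ler0n _ _); rewrite wa lpnorm1 w_norm mulr1.
- rewrite lpnorm1; have := dualK (fun=> 1) (fun=> ler01).
  under eq_bigr do rewrite mul1r.
  move/le_trans; apply; rewrite -[leRHS]mulr1 ler_wpM2l //=.
  by apply: bigmax_le => // i _; rewrite normr1.
- rewrite /=; set S := \sum_(i < n) _.
  have S_ge0 : 0 <= S by apply: sumr_ge0 => i _; apply: powR_ge0.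
  pose w i := `|a i| `^ (q - 1).
  have wa i : w i * `|a i| = `|a i| `^ q.
    rewrite /w -{2}(powRr1 (normr_ge0 (a i))) -powRD subrK //.
    by rewrite gt_eqF.
  have w_pow i : `|w i| `^ r = `|a i| `^ q.
    by rewrite ger0_norm ?powR_ge0 // -powRrM conjugate_subr1_mul.
  have := dualK w (fun i => powR_ge0 _ _).
  rewrite /= (eq_bigr _ (fun i _ => wa i)) (eq_bigr _ (fun i _ => w_pow i)).
  rewrite -/S => S_le.
  have [S0|S_neq0] := eqVneq S 0; first by rewrite S0 powR0 ?invr_neq0 ?gt_eqF.
  have S_gt0 : 0 < S by rewrite lt_neqAle eq_sym S_neq0.
  rewrite -(ler_pM2r (powR_gt0 r^-1 S_gt0)) -powRD ?S_neq0 ?implybT //.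
  by rewrite addrC rq powRr1.
Qed.

End LpDuality.

Section MajorizingSumming.
Context {R : realType} (E Y : normedModType R) (le : Y -> Y -> Prop).
Context (p : \bar R) (T : E -> Y).
Hypotheses (p_ge1 : (1%:E <= p)%E) (linT : bounded_linear T).

Lemma dual_comp_scale (f : Y -> R) :
  dual_elt f -> forall a x, f (T (a *: x)) = a * f (T x).
Proof.
move: linT => [lT _] [lf _] a x.
by rewrite (scalable_linear lT) (scalable_linear lf).
Qed.

Lemma majorizing_strongly_summing :
  positive_p_majorizing le p T -> positive_strongly_p_summing le p T.
Proof.
move=> [C C_gt0 majT]; exists C => // n x ys ys_pos.
pose z i := `|x i|^-1 *: x i.
have z_le1 i : `|z i| <= 1.
  rewrite normrZ normfV normr_id.
  by have [->|x_neq0] := eqVneq `|x i| 0; rewrite ?invr0 ?mul0r ?mulVf.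
have x_eq i : x i = `|x i| *: z i.
  rewrite /z scalerA; have [/normr0_eq0->|x_neq0] := eqVneq `|x i| 0.
    by rewrite scaler0.
  by rewrite mulfV ?scale1r.
have -> : \sum_(i < n) `|ys i (T (x i))| =
           \sum_(i < n) `| `|x i| * ys i (T (z i))|.
  by apply: eq_bigr => i _; rewrite {1}x_eq (dual_comp_scale _ (ys_pos i).1).
apply: le_trans (lpnorm_hoelder _ _ _ _ p_ge1) _.
by rewrite mulrAC [leRHS]mulrC ler_wpM2l ?lpnorm_ge0 ?majT.
Qed.

Lemma strongly_summing_majorizing :
  positive_strongly_p_summing le p T -> positive_p_majorizing le p T.
Proof.
move=> [C C_gt0 sumT]; exists C => // n z ys z_le1 ys_pos.
have CW_ge0 : 0 <= C * weak_norm (conj_exp p) ys.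
  by rewrite mulr_ge0 ?weak_norm_ge0 ?ltW.
apply: lpnorm_conj_exp_le => // w w_ge0.
have -> : \sum_(i < n) w i * `|ys i (T (z i))| =
           \sum_(i < n) `|ys i (T (w i *: z i))|.
  apply: eq_bigr => i _.
  by rewrite (dual_comp_scale _ (ys_pos i).1) normrM ger0_norm.
apply: le_trans (sumT n _ ys ys_pos) _.
rewrite mulrAC ler_wpM2l //; apply: lpnorm_le => [|i].
  exact: lt_le_trans p_ge1.
by rewrite normr_id normrZ ger0_norm ?w_ge0 // ler_piMr.
Qed.

End MajorizingSumming.

Theorem corollary3p6 (R : realType) (p : \bar R)
  (E Y : completeNormedModType R) (le : Y -> Y -> Prop) (T : E -> Y) :
  (1%:E <= p)%E ->
  banach_lattice_order le ->
  bounded_linear T ->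
  (positive_p_majorizing le p T <-> positive_strongly_p_summing le p T).
Proof.
move=> p_ge1 _ linT; split.
- exact: majorizing_strongly_summing.
- exact: strongly_summing_majorizing.
Qed.
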